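(* Let $(X,d)$ be a metric space, $\lambda\ge0$, and $\ell\in\mathrm{LSC}(X)$ with $\inf_X\ell=0$. A function $u:X\to\mathbb{R}$ is a solution of $(\mathcal{G}_\lambda)$ if and only if it is a V-solution of $(\mathcal{G}_\lambda)$.
   Context: $\mathrm{LSC}(X)$ is the set of real-valued lower semicontinuous functions. Global slope: $G[u](x)=\sup_{y\neq x}\frac{(u(x)-u(y))_+}{d(x,y)}$ if $u(x)<+\infty$, $G[u](x)=+\infty$ otherwise. Pointwise notions for $(\mathcal{G}_\lambda)$: a subsolution is $u$ with $\inf_Xu=0$ and $\lambda u+G[u]\le\ell$ on $X$; a supersolution is a lower semicontinuous $v$ with $\inf_Xv=0$ and $\lambda v+G[v]\ge\ell$ on $X$; a solution is a lower semicontinuous function that is both. Viscosity notions: $u:X\to[0,+\infty)$ is a V-subsolution if $\inf_Xu=0$ and for every $x\in X$ and every $\phi:X\to\mathbb{R}$ with $\phi\ge u$, $\phi(x)=u(x)$ and $G[\phi](x)<+\infty$, one has $\lambda u(x)+G[\phi](x)\le\ell(x)$. A lower semicontinuous $v:X\to[0,+\infty)$ is a V-supersolution if $\inf_Xv=0$ and for every $x\in X$ and every $\psi:X\to\mathbb{R}$ with $\psi\le v$, $\psi(x)=v(x)$ and $G[\psi](x)<+\infty$, one has $\lambda v(x)+G[\psi](x)\ge\ell(x)$. A V-solution is a function in $\mathrm{LSC}(X)$ that is both a V-subsolution and a V-supersolution. *)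

From Stdlib Require Import Reals.
From Coquelicot Require Import Coquelicot.
Open Scope R_scope.

Definition is_metric {X : Type} (d : X -> X -> R) : Prop :=
  (forall x y, 0 <= d x y) /\
  (forall x y, d x y = 0 <-> x = y) /\
  (forall x y, d x y = d y x) /\
  (forall x y z, d x z <= d x y + d y z).

Definition lsc {X : Type} (d : X -> X -> R) (u : X -> R) : Prop :=
  forall x eps, 0 < eps -> exists delta, 0 < delta /\
    forall y, d x y < delta -> u x - eps < u y.

Definition inf_is_zero {X : Type} (u : X -> R) : Prop :=
  (forall x, 0 <= u x) /\ (forall eps, 0 < eps -> exists x, u x < eps).

(* Global slope G[u](x) = sup_{y <> x} (u x - u y)_+ / d(x,y) in [0,+oo]
   (u real-valued, so u x < +oo always; sup of the empty family taken as 0). *)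
Definition gslope {X : Type} (d : X -> X -> R) (u : X -> R) (x : X) : Rbar :=
  Lub_Rbar (fun r => r = 0 \/ exists y, y <> x /\ r = Rmax 0 (u x - u y) / d x y).

Definition subsol {X : Type} (d : X -> X -> R) (lam : R) (l u : X -> R) : Prop :=
  inf_is_zero u /\
  forall x, Rbar_le (Rbar_plus (lam * u x) (gslope d u x)) (l x).

Definition supersol {X : Type} (d : X -> X -> R) (lam : R) (l v : X -> R) : Prop :=
  lsc d v /\ inf_is_zero v /\
  forall x, Rbar_le (l x) (Rbar_plus (lam * v x) (gslope d v x)).

Definition solution {X : Type} (d : X -> X -> R) (lam : R) (l u : X -> R) : Prop :=
  lsc d u /\ subsol d lam l u /\ supersol d lam l u.

Definition Vsubsol {X : Type} (d : X -> X -> R) (lam : R) (l u : X -> R) : Prop :=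
  (forall x, 0 <= u x) /\ inf_is_zero u /\
  forall (x : X) (phi : X -> R),
    (forall y, u y <= phi y) -> phi x = u x -> gslope d phi x <> p_infty ->
    Rbar_le (Rbar_plus (lam * u x) (gslope d phi x)) (l x).

Definition Vsupersol {X : Type} (d : X -> X -> R) (lam : R) (l v : X -> R) : Prop :=
  lsc d v /\ (forall x, 0 <= v x) /\ inf_is_zero v /\
  forall (x : X) (psi : X -> R),
    (forall y, psi y <= v y) -> psi x = v x -> gslope d psi x <> p_infty ->
    Rbar_le (l x) (Rbar_plus (lam * v x) (gslope d psi x)).

Definition Vsolution {X : Type} (d : X -> X -> R) (lam : R) (l u : X -> R) : Prop :=
  lsc d u /\ Vsubsol d lam l u /\ Vsupersol d lam l u.

(* Both directions compare slopes of functions touching at a point.  If phi >= u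
   touches u at x, every difference quotient of phi at x is at most that of u, so
   G[phi](x) <= G[u](x); symmetrically G[v](x) <= G[psi](x) for psi <= v touching
   at x.  Hence pointwise (super/sub)solutions are viscosity ones.  Conversely, the
   cone max(u, u(x) - k d(x, .)) touches u from above at x with slope at most k,
   and with k the difference quotient of u towards a point y its slope is at least
   k; so the viscosity inequality on cones bounds every difference quotient of u,
   i.e. G[u](x).  For supersolutions u itself is an admissible test function
   whenever G[u](x) is finite. *)
From Stdlib Require Import Reals Lra.
From Coquelicot Require Import Coquelicot.
Open Scope R_scope.

Lemma Rbar_plus_finite_le (c L : R) (g : Rbar) :
  Rbar_le (Rbar_plus c g) L <-> Rbar_le g (L - c).
Proof. destruct g; simpl; lra. Qed.

Section GlobalSlope.
Variables (X : Type) (d : X -> X -> R).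

Let quotients (g : X -> R) (x : X) (r : R) : Prop :=
  r = 0 \/ exists y, y <> x /\ r = Rmax 0 (g x - g y) / d x y.

Lemma gslope_ge0 (g : X -> R) (x : X) : Rbar_le 0 (gslope d g x).
Proof. apply (proj1 (Lub_Rbar_correct (quotients g x))). now left. Qed.

Lemma quotient_le_gslope (g : X -> R) (x y : X) :
  y <> x -> Rbar_le (Rmax 0 (g x - g y) / d x y) (gslope d g x).
Proof.
  intros Hyx. apply (proj1 (Lub_Rbar_correct (quotients g x))).
  right. now exists y.
Qed.

Lemma gslope_le_ub (g : X -> R) (x : X) (b : Rbar) :
  Rbar_le 0 b ->
  (forall y, y <> x -> Rbar_le (Rmax 0 (g x - g y) / d x y) b) ->
  Rbar_le (gslope d g x) b.
Proof.
  intros Hb0 Hb. apply (proj2 (Lub_Rbar_correct (quotients g x))).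
  intros r [-> | [y [Hyx ->]]]; auto.
Qed.

Hypothesis hd : is_metric d.

Lemma dist_pos (x y : X) : y <> x -> 0 < d x y.
Proof.
  destruct hd as [Hge0 [Hsep _]]. intros Hyx.
  destruct (Hge0 x y) as [Hlt | Heq]; [exact Hlt |].
  now destruct Hyx; symmetry; apply Hsep.
Qed.

Lemma dist_refl (x : X) : d x x = 0.
Proof. now apply (proj1 (proj2 hd)). Qed.

Lemma gslope_touching_above (f g : X -> R) (x : X) :
  (forall y, f y <= g y) -> g x = f x -> Rbar_le (gslope d g x) (gslope d f x).
Proof.
  intros Hfg Hx. apply gslope_le_ub; [apply gslope_ge0 |].
  intros y Hyx. eapply Rbar_le_trans; [| apply (quotient_le_gslope f x y Hyx)].
  simpl. apply Rmult_le_compat_r.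
  - now apply Rlt_le, Rinv_0_lt_compat, dist_pos.
  - apply Rle_max_compat_l. rewrite Hx. specialize (Hfg y). lra.
Qed.

Definition cone (u : X -> R) (x : X) (k : R) (y : X) : R :=
  Rmax (u y) (u x - k * d x y).

Lemma cone_ge (u : X -> R) (x : X) (k : R) (y : X) : u y <= cone u x k y.
Proof. apply Rmax_l. Qed.

Lemma cone_center (u : X -> R) (x : X) (k : R) : cone u x k x = u x.
Proof. unfold cone. rewrite dist_refl. apply Rmax_left. lra. Qed.

Lemma gslope_cone_le (u : X -> R) (x : X) (k : R) :
  0 <= k -> Rbar_le (gslope d (cone u x k) x) k.
Proof.
  intros Hk. apply gslope_le_ub; [exact Hk |].
  intros y Hyx. simpl. rewrite cone_center.
  pose proof (dist_pos x y Hyx) as Hd.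
  apply Rmult_le_reg_r with (d x y); [exact Hd |].
  unfold Rdiv. rewrite Rmult_assoc, Rinv_l, Rmult_1_r by lra.
  apply Rmax_lub; [nra |].
  pose proof (Rmax_r (u y) (u x - k * d x y)). unfold cone in *. lra.
Qed.

Lemma gslope_le_of_cones (u : X -> R) (x : X) (b : R) :
  (forall k, 0 <= k -> Rbar_le (gslope d (cone u x k) x) b) ->
  Rbar_le (gslope d u x) b.
Proof.
  intros Hcones. apply gslope_le_ub.
  { eapply Rbar_le_trans; [apply gslope_ge0 | apply (Hcones 0); lra]. }
  intros y Hyx. pose proof (dist_pos x y Hyx) as Hd.
  set (k := Rmax 0 (u x - u y) / d x y).
  assert (Hk : 0 <= k).
  { apply Rmult_le_pos; [apply Rmax_l | now apply Rlt_le, Rinv_0_lt_compat]. }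
  (* the cone of slope k passes through (y, u y), so its quotient towards y is k *)
  assert (Hcone_y : cone u x k y = u y).
  { apply Rmax_left. replace (k * d x y) with (Rmax 0 (u x - u y))
      by (unfold k; field; lra).
    pose proof (Rmax_r 0 (u x - u y)). lra. }
  eapply Rbar_le_trans; [| apply (Hcones k Hk)].
  pose proof (quotient_le_gslope (cone u x k) x y Hyx) as Hq.
  now rewrite cone_center, Hcone_y in Hq.
Qed.

Variables (lam : R) (l u : X -> R).

Lemma Vsubsol_of_subsol : subsol d lam l u -> Vsubsol d lam l u.
Proof.
  intros [Hinf Hsub]. split; [apply Hinf | split; [exact Hinf |]].
  intros x phi Hphi Hx _. eapply Rbar_le_trans; [| apply Hsub].
  apply Rbar_plus_le_compat; [apply Rbar_le_refl |].
  now apply gslope_touching_above.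
Qed.

Lemma Vsupersol_of_supersol : supersol d lam l u -> Vsupersol d lam l u.
Proof.
  intros [Hlsc [Hinf Hsup]]. split; [exact Hlsc | split; [apply Hinf |]].
  split; [exact Hinf |].
  intros x psi Hpsi Hx _. eapply Rbar_le_trans; [apply Hsup |].
  apply Rbar_plus_le_compat; [apply Rbar_le_refl |].
  now apply gslope_touching_above.
Qed.

Lemma subsol_of_Vsubsol : Vsubsol d lam l u -> subsol d lam l u.
Proof.
  intros [_ [Hinf Hsub]]. split; [exact Hinf |].
  intros x. apply Rbar_plus_finite_le, gslope_le_of_cones.
  intros k Hk. apply Rbar_plus_finite_le.
  apply Hsub; [apply cone_ge | apply cone_center |].
  intros Hinfty. pose proof (gslope_cone_le u x k Hk) as Hle.
  now rewrite Hinfty in Hle.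
Qed.

Lemma supersol_of_Vsupersol : Vsupersol d lam l u -> supersol d lam l u.
Proof.
  intros [Hlsc [_ [Hinf Hsup]]]. split; [exact Hlsc | split; [exact Hinf |]].
  intros x. destruct (Rbar_eq_dec (gslope d u x) p_infty) as [Hinfty | Hfin].
  - now rewrite Hinfty.
  - apply Hsup; [intros y; apply Rle_refl | reflexivity | exact Hfin].
Qed.

End GlobalSlope.

Theorem theorem4p4 (X : Type) (d : X -> X -> R) (lam : R) (l : X -> R)
  (hd : is_metric d) (hlam : 0 <= lam) (hl : lsc d l) (hl0 : inf_is_zero l)
  (u : X -> R) :
  solution d lam l u <-> Vsolution d lam l u.
Proof.
  split.
  - intros [Hlsc [Hsub Hsup]]. split; [exact Hlsc |].
    split; [now apply Vsubsol_of_subsol | now apply Vsupersol_of_supersol].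
  - intros [Hlsc [Hsub Hsup]]. split; [exact Hlsc |].
    split; [now apply subsol_of_Vsubsol | now apply supersol_of_Vsupersol].
Qed.
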